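(* Let $a>0$, $\alpha\in[0,1)$ and $f\in\mathcal C_a$. Then the function $\mathrm{Sh}_\alpha(f)$ is convex.
   Context: $\mathcal C_a$ is the set of $C^1$ functions $f:\mathbb R\to\mathbb R$ that are even, satisfy $f(s)=|s|$ for $|s|\ge a$ and are strictly convex on $[-a,a]$. For $f\in\mathcal C_a$: $F_\alpha(s)=f(s)-\alpha s$, $x_\alpha^+=(f')^{-1}(\alpha)\in[0,a)$ (inverse of $f':[-a,a]\to[-1,1]$); $F_\alpha$ decreases on $(-\infty,x_\alpha^+]$ and increases on $[x_\alpha^+,\infty)$. Let $F_\alpha^{-1}$ be the inverse of $F_\alpha|_{[x_\alpha^+,\infty)}$, $\phi=F_\alpha^{-1}\circ F_\alpha$, $\delta_x=(1-\alpha)^{-1}F_\alpha(x)-\phi(x)$, $s_\alpha=x_\alpha^++\delta_{x_\alpha^+}$; $x\mapsto x+\delta_x$ is an increasing bijection $(-\infty,x_\alpha^+]\to(-\infty,s_\alpha]$ with inverse $\tau$. Define $\mathrm{Sh}_\alpha(f)(x)=\alpha x+F_\alpha(\tau(x))$ for $x\le s_\alpha$ and $=x$ for $x>s_\alpha$. *)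

From Stdlib Require Import Reals ClassicalEpsilon.
From Coquelicot Require Import Coquelicot.
Open Scope R_scope.

Definition C1 (f : R -> R) : Prop :=
  (forall x, ex_derive f x) /\ (forall x, continuous (Derive f) x).

Definition strictly_convex_on (lo hi : R) (f : R -> R) : Prop :=
  forall x y t, lo <= x <= hi -> lo <= y <= hi -> x <> y -> 0 < t < 1 ->
    f (t * x + (1 - t) * y) < t * f x + (1 - t) * f y.

Definition convex_fun (g : R -> R) : Prop :=
  forall x y t, 0 <= t <= 1 ->
    g (t * x + (1 - t) * y) <= t * g x + (1 - t) * g y.

Definition class_C (a : R) (f : R -> R) : Prop :=
  C1 f /\ (forall s, f (- s) = f s) /\
  (forall s, a <= Rabs s -> f s = Rabs s) /\
  strictly_convex_on (- a) a f.

Definition Fa (f : R -> R) (alpha s : R) : R := f s - alpha * s.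

Definition xplus (a : R) (f : R -> R) (alpha : R) : R :=
  epsilon (inhabits 0) (fun x => - a <= x <= a /\ Derive f x = alpha).

Definition Fainv (a : R) (f : R -> R) (alpha y : R) : R :=
  epsilon (inhabits 0) (fun x => xplus a f alpha <= x /\ Fa f alpha x = y).

Definition phi (a : R) (f : R -> R) (alpha x : R) : R :=
  Fainv a f alpha (Fa f alpha x).

Definition delta (a : R) (f : R -> R) (alpha x : R) : R :=
  Fa f alpha x / (1 - alpha) - phi a f alpha x.

Definition s_alpha (a : R) (f : R -> R) (alpha : R) : R :=
  xplus a f alpha + delta a f alpha (xplus a f alpha).

(* tau: inverse of x |-> x + delta_x, (-oo, x_alpha^+] -> (-oo, s_alpha] *)
Definition tau (a : R) (f : R -> R) (alpha y : R) : R :=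
  epsilon (inhabits 0)
    (fun x => x <= xplus a f alpha /\ x + delta a f alpha x = y).

Definition Sh (a : R) (f : R -> R) (alpha x : R) : R :=
  if Rle_dec x (s_alpha a f alpha)
  then alpha * x + Fa f alpha (tau a f alpha x)
  else x.

From Stdlib Require Import Reals Lra ClassicalEpsilon.
From Coquelicot Require Import Coquelicot.
Open Scope R_scope.

(* Since f' is increasing with values in [-1, 1], F_alpha is convex, decreasing
   on (-oo, x_alpha^+] and increasing on [x_alpha^+, +oo).  Let R and L be its
   right and left inverse branches on [min F_alpha, +oo).  On (-oo, x_alpha^+]
   the map x |-> x + delta_x factors as h o F_alpha with
   h c = c / (1 - alpha) - R c + L c.  As inverses of a convex function on a
   monotone branch, R is concave and L is convex, so h is convex; and since
   F_alpha' <= 1 - alpha, R grows at rate at least 1 / (1 - alpha), so h is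
   strictly decreasing.  Hence K x := F_alpha (tau x), extended by min F_alpha
   beyond s_alpha, is the least level c >= min F_alpha with h c <= x, and the
   least point of a sublevel set of a convex function is convex in the level.
   Finally Sh_alpha(f) x = alpha x + max (K x) ((1 - alpha) x). *)

Lemma IVT_value (g : R -> R) lo hi c :
  continuity g -> lo <= hi -> (g lo - c) * (g hi - c) <= 0 ->
  exists z, lo <= z <= hi /\ g z = c.
Proof.
  intros Hg Hlohi Hsign.
  assert (Hc : continuity (fun x => g x - c)).
  { intro x. apply continuity_pt_minus; [apply Hg|].
    apply continuity_pt_const. now intros u v. }
  destruct (IVT_cor _ lo hi Hc Hlohi Hsign) as [z [Hz Ez]].
  exists z. split; [exact Hz | lra].
Qed.

Lemma continuity_pt_eq_near (g : R -> R) x v :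
  continuity_pt g x ->
  (forall e, 0 < e -> exists y, y <> x /\ Rabs (y - x) < e /\ g y = v) ->
  g x = v.
Proof.
  intros Hc Hnear. destruct (Req_dec (g x) v) as [E|E]; [exact E|exfalso].
  assert (He : 0 < Rabs (g x - v)) by (apply Rabs_pos_lt; lra).
  destruct (Hc _ He) as [del [Hdel Hball]].
  destruct (Hnear del Hdel) as [y [Hyx [Hy Ey]]].
  assert (Hgy : Rabs (g y - g x) < Rabs (g x - v)) by (apply Hball; now repeat split).
  rewrite Ey, Rabs_minus_sym in Hgy. lra.
Qed.

Lemma derive_le_of_right_slope (g : R -> R) x D k r :
  0 < r -> derivable_pt_lim g x D ->
  (forall h, 0 < h < r -> g (x + h) - g x <= k * h) -> D <= k.
Proof.
  intros Hr Hd Hslope. apply Rnot_lt_le. intro Hk.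
  destruct (Hd (D - k)) as [del Hdel]; [lra|].
  assert (Hdel0 := cond_pos del).
  set (h := Rmin (del / 2) (r / 2)).
  assert (Hh : 0 < h) by (apply Rmin_pos; lra).
  assert (Hh1 : h <= del / 2) by apply Rmin_l.
  assert (Hh2 : h <= r / 2) by apply Rmin_r.
  assert (Hq : (g (x + h) - g x) / h <= k).
  { apply Rle_div_l; [lra|]. apply Hslope. lra. }
  specialize (Hdel h ltac:(lra) ltac:(rewrite Rabs_pos_eq; lra)).
  apply Rabs_def2 in Hdel. lra.
Qed.

Lemma convex_tangent (g : R -> R) p q D :
  derivable_pt_lim g p D ->
  (forall t, 0 < t < 1 -> g (t * q + (1 - t) * p) <= t * g q + (1 - t) * g p) ->
  g p + D * (q - p) <= g q.
Proof.
  intros Hd Hchord.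
  assert (Hline : derivable_pt_lim (fun t => p + t * (q - p)) 0 (q - p)).
  { apply is_derive_Reals. auto_derive; [exact I | ring]. }
  assert (Hd0 : derivable_pt_lim g (p + 0 * (q - p)) D).
  { replace (p + 0 * (q - p)) with p by ring. exact Hd. }
  assert (Hseg := derivable_pt_lim_comp _ _ _ _ _ Hline Hd0).
  enough (D * (q - p) <= g q - g p) by lra.
  apply (derive_le_of_right_slope _ 0 _ _ 1 Rlt_0_1 Hseg).
  intros h Hh. unfold comp.
  replace (p + (0 + h) * (q - p)) with (h * q + (1 - h) * p) by ring.
  replace (p + 0 * (q - p)) with p by ring.
  specialize (Hchord h Hh). lra.
Qed.

Lemma convex_of_derive_mono (g g' : R -> R) :
  (forall x, derivable_pt_lim g x (g' x)) ->
  (forall s t, s <= t -> g' s <= g' t) -> convex_fun g.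
Proof.
  intros Hd Hmono.
  assert (Hlt : forall x y t, x < y -> 0 < t < 1 ->
            g (t * x + (1 - t) * y) <= t * g x + (1 - t) * g y).
  { intros x y t Hxy Ht. set (z := t * x + (1 - t) * y).
    destruct (MVT_cor2 g g' x z) as [c1 [E1 Hc1]]; [unfold z; nra | intros; apply Hd|].
    destruct (MVT_cor2 g g' z y) as [c2 [E2 Hc2]]; [unfold z; nra | intros; apply Hd|].
    assert (Hc := Hmono c1 c2 ltac:(lra)).
    assert (L1 : t * (g z - g x) = t * (1 - t) * (y - x) * g' c1)
      by (rewrite E1; unfold z; ring).
    assert (L2 : (1 - t) * (g y - g z) = t * (1 - t) * (y - x) * g' c2)
      by (rewrite E2; unfold z; ring).
    assert (0 <= t * (1 - t) * (y - x) * (g' c2 - g' c1)).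
    { apply Rmult_le_pos; [|lra]. apply Rmult_le_pos; nra. }
    lra. }
  intros x y t Ht.
  destruct (Req_dec t 0) as [->|Ht0].
  { replace (0 * x + (1 - 0) * y) with y by ring. lra. }
  destruct (Req_dec t 1) as [->|Ht1].
  { replace (1 * x + (1 - 1) * y) with x by ring. lra. }
  destruct (Rtotal_order x y) as [Hxy|[<-|Hxy]].
  - apply Hlt; lra.
  - replace (t * x + (1 - t) * x) with x by ring. lra.
  - replace (t * x + (1 - t) * y) with ((1 - t) * y + (1 - (1 - t)) * x) by ring.
    assert (H := Hlt y x (1 - t) Hxy ltac:(lra)). lra.
Qed.

Lemma convex_fun_ext (g1 g2 : R -> R) :
  (forall x, g1 x = g2 x) -> convex_fun g1 -> convex_fun g2.
Proof. intros E Hg x y t Ht. rewrite <- !E. now apply Hg. Qed.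

Lemma convex_fun_Rmax (g1 g2 : R -> R) :
  convex_fun g1 -> convex_fun g2 -> convex_fun (fun x => Rmax (g1 x) (g2 x)).
Proof.
  intros H1 H2 x y t Ht.
  assert (A := H1 x y t Ht). assert (B := H2 x y t Ht).
  assert (W1 := Rmax_l (g1 x) (g2 x)). assert (W2 := Rmax_r (g1 x) (g2 x)).
  assert (W3 := Rmax_l (g1 y) (g2 y)). assert (W4 := Rmax_r (g1 y) (g2 y)).
  apply Rmax_lub; nra.
Qed.

Lemma convex_fun_linear (b : R) : convex_fun (fun x => b * x).
Proof. intros x y t Ht. nra. Qed.

Lemma convex_fun_add_linear (b : R) (g : R -> R) :
  convex_fun g -> convex_fun (fun x => b * x + g x).
Proof. intros Hg x y t Ht. assert (A := Hg x y t Ht). nra. Qed.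

Lemma convex_fun_comp_opp (g : R -> R) : convex_fun g -> convex_fun (fun x => g (- x)).
Proof.
  intros Hg x y t Ht.
  replace (- (t * x + (1 - t) * y)) with (t * - x + (1 - t) * - y) by ring.
  now apply Hg.
Qed.

Lemma convex_fun_min_sublevel (h K : R -> R) m :
  (forall c1 c2 t, m <= c1 -> m <= c2 -> 0 <= t <= 1 ->
     h (t * c1 + (1 - t) * c2) <= t * h c1 + (1 - t) * h c2) ->
  (forall x, m <= K x /\ h (K x) <= x) ->
  (forall x c, m <= c -> h c <= x -> K x <= c) ->
  convex_fun K.
Proof.
  intros Hh HK Hleast x y t Ht.
  destruct (HK x) as [Hx1 Hx2]. destruct (HK y) as [Hy1 Hy2].
  apply Hleast; [nra|].
  assert (H := Hh _ _ t Hx1 Hy1 Ht). nra.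
Qed.

Section IncreasingInverse.

Variables (F G : R -> R) (p : R).
Hypothesis F_incr : forall s t, p <= s -> s < t -> F s < F t.
Hypothesis G_spec : forall c, F p <= c -> p <= G c /\ F (G c) = c.

Lemma incr_le s t : p <= s -> s <= t -> F s <= F t.
Proof.
  intros Hs Hst. destruct (Req_dec s t) as [->|Hne]; [lra|].
  left. apply F_incr; lra.
Qed.

Lemma incr_lt_reflect s t : p <= t -> F s < F t -> s < t.
Proof.
  intros Ht Hlt. apply Rnot_le_lt. intro Hts.
  assert (F t <= F s) by (apply incr_le; lra). lra.
Qed.

Lemma inverse_cancel z : p <= z -> G (F z) = z.
Proof.
  intros Hz. destruct (G_spec (F z)) as [HG EG]; [apply incr_le; lra|].
  apply Rle_antisym; apply Rnot_lt_le; intro Hlt.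
  - assert (F z < F (G (F z))) by (apply F_incr; lra). lra.
  - assert (F (G (F z)) < F z) by (apply F_incr; lra). lra.
Qed.

Lemma inverse_strict_incr c1 c2 : F p <= c1 -> c1 < c2 -> G c1 < G c2.
Proof.
  intros H1 H12.
  destruct (G_spec c1 H1) as [_ E1]. destruct (G_spec c2) as [A2 E2]; [lra|].
  apply incr_lt_reflect; [exact A2|]. lra.
Qed.

Lemma inverse_concave c1 c2 t :
  convex_fun F -> F p <= c1 -> F p <= c2 -> 0 <= t <= 1 ->
  t * G c1 + (1 - t) * G c2 <= G (t * c1 + (1 - t) * c2).
Proof.
  intros Hconv H1 H2 Ht.
  destruct (G_spec c1 H1) as [A1 E1]. destruct (G_spec c2 H2) as [A2 E2].
  destruct (G_spec (t * c1 + (1 - t) * c2)) as [A E]; [nra|].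
  apply Rnot_lt_le. intro Hlt.
  assert (Hchord := Hconv (G c1) (G c2) t Ht). rewrite E1, E2 in Hchord.
  assert (F (G (t * c1 + (1 - t) * c2)) < F (t * G c1 + (1 - t) * G c2))
    by (apply F_incr; lra).
  lra.
Qed.

Lemma inverse_continuity : continuity (fun c => G (Rmax (F p) c)).
Proof.
  intros c0 eps Heps. simpl. unfold R_dist.
  set (m := F p). set (c1 := Rmax m c0).
  assert (Hc1 : m <= c1) by apply Rmax_l.
  destruct (G_spec c1 Hc1) as [Hz Ez]. set (z := G c1) in *.
  assert (Hval : forall c, p <= G (Rmax m c) /\ F (G (Rmax m c)) = Rmax m c)
    by (intro c; apply G_spec, Rmax_l).
  assert (Hup : c1 < F (z + eps)) by (rewrite <- Ez; apply F_incr; lra).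
  assert (Hbelow : forall c, c < F (z + eps) -> G (Rmax m c) < z + eps).
  { intros c Hc. destruct (Hval c) as [_ E]. apply incr_lt_reflect; [lra|].
    rewrite E. apply Rmax_lub_lt; lra. }
  destruct (Rlt_le_dec (z - eps) p) as [Hlow|Hlow].
  - exists (F (z + eps) - c1). split; [lra|]. intros c [_ Hc].
    apply Rabs_def2 in Hc. assert (W : c0 <= c1) by apply Rmax_r.
    assert (G (Rmax m c) < z + eps) by (apply Hbelow; lra).
    destruct (Hval c) as [A _]. apply Rabs_def1; lra.
  - assert (Hlo : F (z - eps) < c1) by (rewrite <- Ez; apply F_incr; lra).
    assert (m <= F (z - eps)) by (apply incr_le; lra).
    assert (Hc10 : c1 = c0).
    { destruct (Rle_lt_dec c0 m) as [Hle|Hlt]; [|apply Rmax_right; lra].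
      assert (c1 = m) by (apply Rmax_left; exact Hle). lra. }
    exists (Rmin (F (z + eps) - c1) (c1 - F (z - eps))).
    split; [apply Rmin_pos; lra|]. intros c [_ Hc].
    assert (W1 := Rmin_l (F (z + eps) - c1) (c1 - F (z - eps))).
    assert (W2 := Rmin_r (F (z + eps) - c1) (c1 - F (z - eps))).
    apply Rabs_def2 in Hc.
    assert (G (Rmax m c) < z + eps) by (apply Hbelow; lra).
    assert (z - eps < G (Rmax m c)).
    { destruct (Hval c) as [A E]. apply incr_lt_reflect; [exact A|].
      rewrite E. assert (W := Rmax_r m c). lra. }
    apply Rabs_def1; lra.
Qed.

End IncreasingInverse.

Section ClassC.

Variables (a : R) (f : R -> R).
Hypothesis a_pos : 0 < a.
Hypothesis f_ex_derive : forall x, ex_derive f x.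
Hypothesis f_Derive_cont : forall x, continuous (Derive f) x.
Hypothesis f_abs : forall s, a <= Rabs s -> f s = Rabs s.
Hypothesis f_strict : strictly_convex_on (- a) a f.

Lemma f_right s : a <= s -> f s = s.
Proof. intros Hs. rewrite f_abs; rewrite Rabs_pos_eq; lra. Qed.

Lemma f_left s : s <= - a -> f s = - s.
Proof. intros Hs. rewrite f_abs; rewrite Rabs_left; lra. Qed.

Lemma f_derivable x : derivable_pt_lim f x (Derive f x).
Proof. apply is_derive_Reals, Derive_correct, f_ex_derive. Qed.

Lemma Derive_f_continuous x : continuity_pt (Derive f) x.
Proof. apply continuity_pt_filterlim, f_Derive_cont. Qed.

Lemma Derive_f_right s : a < s -> Derive f s = 1.
Proof.
  intros Hs. rewrite (Derive_ext_loc f id s); [apply Derive_id|].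
  apply filter_imp with (fun t => a < t); [|now apply open_gt].
  intros t Ht. unfold id. apply f_right. lra.
Qed.

Lemma Derive_f_left s : s < - a -> Derive f s = -1.
Proof.
  intros Hs. rewrite (Derive_ext_loc f (fun t => - id t) s).
  { now rewrite Derive_opp, Derive_id. }
  apply filter_imp with (fun t => t < - a); [|now apply open_lt].
  intros t Ht. unfold id. apply f_left. lra.
Qed.

Lemma Derive_f_at_a : Derive f a = 1.
Proof.
  apply continuity_pt_eq_near; [apply Derive_f_continuous|].
  intros e He. exists (a + e / 2). split; [lra|]. split.
  - rewrite Rabs_pos_eq; lra.
  - apply Derive_f_right. lra.
Qed.

Lemma Derive_f_at_opp_a : Derive f (- a) = -1.
Proof.
  apply continuity_pt_eq_near; [apply Derive_f_continuous|].
  intros e He. exists (- a - e / 2). split; [lra|]. split.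
  - rewrite Rabs_left; lra.
  - apply Derive_f_left. lra.
Qed.

Lemma Derive_f_strict s t : - a <= s -> s < t -> t <= a -> Derive f s < Derive f t.
Proof.
  intros Hs Hst Ht. set (mid := (s + t) / 2).
  assert (Hmid : f mid < 1 / 2 * f s + (1 - 1 / 2) * f t).
  { replace mid with (1 / 2 * s + (1 - 1 / 2) * t) by (unfold mid; field).
    apply f_strict; lra. }
  assert (Ts : f s + Derive f s * (mid - s) <= f mid).
  { apply convex_tangent; [apply f_derivable|].
    intros u Hu. left. apply f_strict; unfold mid; lra. }
  assert (Tt : f t + Derive f t * (mid - t) <= f mid).
  { apply convex_tangent; [apply f_derivable|].
    intros u Hu. left. apply f_strict; unfold mid; lra. }
  unfold mid in *. nra.
Qed.

Lemma Derive_f_clamp s : Derive f s = Derive f (Rmax (- a) (Rmin a s)).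
Proof.
  destruct (Rlt_le_dec s (- a)) as [Hs|Hs].
  - rewrite Rmin_right, Rmax_left by lra.
    now rewrite Derive_f_left, Derive_f_at_opp_a.
  - destruct (Rlt_le_dec a s) as [Has|Has].
    + rewrite Rmin_left, Rmax_right by lra.
      now rewrite Derive_f_right, Derive_f_at_a.
    + now rewrite Rmin_right, Rmax_right by lra.
Qed.

Lemma Derive_f_mono s t : s <= t -> Derive f s <= Derive f t.
Proof.
  intros Hst. rewrite (Derive_f_clamp s), (Derive_f_clamp t).
  assert (Hle : Rmax (- a) (Rmin a s) <= Rmax (- a) (Rmin a t))
    by now apply Rle_max_compat_l, Rle_min_compat_l.
  destruct (Req_dec (Rmax (- a) (Rmin a s)) (Rmax (- a) (Rmin a t))) as [E|E].
  - rewrite E. lra.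
  - left. apply Derive_f_strict; [apply Rmax_l | lra |].
    apply Rmax_lub; [lra | apply Rmin_l].
Qed.

Lemma Derive_f_le_1 s : Derive f s <= 1.
Proof.
  rewrite <- (Derive_f_right (Rmax s a + 1)) by (assert (W := Rmax_r s a); lra).
  apply Derive_f_mono. assert (W := Rmax_l s a). lra.
Qed.

Section Shift.

Variable alpha : R.
Hypothesis alpha_range : 0 <= alpha < 1.

Local Notation F := (Fa f alpha).
Local Notation xp := (xplus a f alpha).

Lemma xplus_spec : - a <= xp <= a /\ Derive f xp = alpha.
Proof.
  unfold xplus. apply epsilon_spec.
  destruct (IVT_value (Derive f) (- a) a alpha) as [x Hx].
  - exact Derive_f_continuous.
  - lra.
  - rewrite Derive_f_at_opp_a, Derive_f_at_a. nra.
  - now exists x.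
Qed.

Lemma Derive_f_lt_alpha s : s < xp -> Derive f s < alpha.
Proof.
  intros Hs. destruct xplus_spec as [Hxp Dxp].
  destruct (Rlt_le_dec s (- a)).
  - rewrite Derive_f_left by lra. lra.
  - rewrite <- Dxp. apply Derive_f_strict; lra.
Qed.

Lemma Derive_f_gt_alpha s : xp < s -> alpha < Derive f s.
Proof.
  intros Hs. destruct xplus_spec as [Hxp Dxp].
  destruct (Rlt_le_dec a s).
  - rewrite Derive_f_right by lra. lra.
  - rewrite <- Dxp. apply Derive_f_strict; lra.
Qed.

Lemma F_derivable x : derivable_pt_lim F x (Derive f x - alpha).
Proof.
  apply is_derive_Reals. unfold Fa.
  apply (is_derive_minus f (fun s => alpha * s)).
  - apply Derive_correct, f_ex_derive.
  - auto_derive; [exact I | ring].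
Qed.

Lemma F_mvt s t : s < t ->
  exists c, s < c < t /\ F t - F s = (Derive f c - alpha) * (t - s).
Proof.
  intros Hst.
  destruct (MVT_cor2 F (fun c => Derive f c - alpha) s t Hst) as [c [E Hc]].
  - intros c _. apply F_derivable.
  - now exists c.
Qed.

Lemma F_decr s t : s < t -> t <= xp -> F t < F s.
Proof.
  intros Hst Ht. destruct (F_mvt s t Hst) as [c [Hc E]].
  assert (Derive f c < alpha) by (apply Derive_f_lt_alpha; lra). nra.
Qed.

Lemma F_incr s t : xp <= s -> s < t -> F s < F t.
Proof.
  intros Hs Hst. destruct (F_mvt s t Hst) as [c [Hc E]].
  assert (alpha < Derive f c) by (apply Derive_f_gt_alpha; lra). nra.
Qed.

Lemma F_slope_le s t : s <= t -> F t - F s <= (1 - alpha) * (t - s).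
Proof.
  intros Hst. destruct (Req_dec s t) as [->|Hne]; [lra|].
  destruct (F_mvt s t ltac:(lra)) as [c [Hc E]].
  assert (Derive f c <= 1) by apply Derive_f_le_1. nra.
Qed.

Lemma F_ge_min s : F xp <= F s.
Proof.
  destruct (Rtotal_order s xp) as [Hs|[->|Hs]].
  - left. now apply F_decr.
  - lra.
  - left. apply F_incr; lra.
Qed.

Lemma F_continuous : continuity F.
Proof.
  intro x. apply derivable_continuous_pt. exists (Derive f x - alpha).
  apply F_derivable.
Qed.

Lemma F_right s : a <= s -> F s = (1 - alpha) * s.
Proof. intros Hs. unfold Fa. rewrite f_right by exact Hs. ring. Qed.

Lemma F_left s : s <= - a -> F s = - (1 + alpha) * s.
Proof. intros Hs. unfold Fa. rewrite f_left by exact Hs. ring. Qed.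

Lemma F_convex : convex_fun F.
Proof.
  apply (convex_of_derive_mono F (fun x => Derive f x - alpha) F_derivable).
  intros s t Hst. assert (Derive f s <= Derive f t) by now apply Derive_f_mono. lra.
Qed.

Definition Fainv_left (c : R) : R :=
  epsilon (inhabits 0) (fun x => x <= xp /\ F x = c).

Lemma Fainv_spec c : F xp <= c -> xp <= Fainv a f alpha c /\ F (Fainv a f alpha c) = c.
Proof.
  intros Hc. unfold Fainv. apply epsilon_spec.
  destruct xplus_spec as [Hxp _].
  set (M := Rmax a (c / (1 - alpha)) + 1).
  assert (HMa : a <= M) by (unfold M; assert (W := Rmax_l a (c / (1 - alpha))); lra).
  assert (HMc : c < (1 - alpha) * M).
  { rewrite Rmult_comm. apply Rlt_div_l; [lra|].
    unfold M. assert (W := Rmax_r a (c / (1 - alpha))). lra. }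
  destruct (IVT_value F xp M c F_continuous) as [z [Hz Ez]]; [lra| |].
  - rewrite (F_right M HMa). nra.
  - exists z. split; [lra | exact Ez].
Qed.

Lemma Fainv_left_spec c : F xp <= c -> Fainv_left c <= xp /\ F (Fainv_left c) = c.
Proof.
  intros Hc. unfold Fainv_left. apply epsilon_spec.
  destruct xplus_spec as [Hxp _].
  set (M := Rmin (- a) (- (c / (1 + alpha))) - 1).
  assert (HMa : M <= - a)
    by (unfold M; assert (W := Rmin_l (- a) (- (c / (1 + alpha)))); lra).
  assert (HMc : c < - (1 + alpha) * M).
  { replace (- (1 + alpha) * M) with (- M * (1 + alpha)) by ring.
    apply Rlt_div_l; [lra|].
    unfold M. assert (W := Rmin_r (- a) (- (c / (1 + alpha)))). lra. }
  destruct (IVT_value F M xp c F_continuous) as [z [Hz Ez]]; [lra| |].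
  - rewrite (F_left M HMa). nra.
  - exists z. split; [lra | exact Ez].
Qed.

(* The left branch is handled through c |-> - Fainv_left c, the increasing
   inverse of s |-> F (- s) on [- xp, +oo), so that the lemmas of
   IncreasingInverse apply to it with p := - xp. *)
Lemma F_opp_incr s t : - xp <= s -> s < t -> F (- s) < F (- t).
Proof. intros Hs Hst. apply F_decr; lra. Qed.

Lemma Fainv_left_opp_spec c :
  F (- - xp) <= c -> - xp <= - Fainv_left c /\ F (- - Fainv_left c) = c.
Proof.
  rewrite !Ropp_involutive. intros Hc.
  destruct (Fainv_left_spec c Hc) as [A E]. split; [lra | exact E].
Qed.

Lemma Fainv_cancel z : xp <= z -> Fainv a f alpha (F z) = z.
Proof. exact (inverse_cancel F _ xp F_incr Fainv_spec z). Qed.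

Lemma Fainv_left_cancel z : z <= xp -> Fainv_left (F z) = z.
Proof.
  intros Hz.
  assert (H := inverse_cancel _ _ (- xp) F_opp_incr Fainv_left_opp_spec (- z) ltac:(lra)).
  cbv beta in H. rewrite Ropp_involutive in H. lra.
Qed.

Lemma Fainv_slope c1 c2 : F xp <= c1 -> c1 <= c2 ->
  c2 - c1 <= (1 - alpha) * (Fainv a f alpha c2 - Fainv a f alpha c1).
Proof.
  intros H1 H12.
  destruct (Fainv_spec c1 H1) as [A1 E1]. destruct (Fainv_spec c2) as [A2 E2]; [lra|].
  assert (Hle : Fainv a f alpha c1 <= Fainv a f alpha c2).
  { destruct (Req_dec c1 c2) as [->|Hne]; [lra|].
    left. apply (inverse_strict_incr F _ xp F_incr Fainv_spec); lra. }
  assert (H := F_slope_le _ _ Hle). rewrite E1, E2 in H. exact H.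
Qed.

Lemma Fainv_left_strict_decr c1 c2 : F xp <= c1 -> c1 < c2 -> Fainv_left c2 < Fainv_left c1.
Proof.
  intros H1 H12. rewrite <- (Ropp_involutive xp) in H1.
  assert (H := inverse_strict_incr _ _ (- xp) F_opp_incr Fainv_left_opp_spec c1 c2 H1 H12).
  lra.
Qed.

Definition shift_at_level (c : R) : R :=
  c / (1 - alpha) - Fainv a f alpha c + Fainv_left c.

Lemma shift_at_level_F y : y <= xp -> y + delta a f alpha y = shift_at_level (F y).
Proof.
  intros Hy. unfold delta, phi, shift_at_level. rewrite Fainv_left_cancel by exact Hy. ring.
Qed.

Lemma s_alpha_shift : s_alpha a f alpha = shift_at_level (F xp).
Proof. apply shift_at_level_F. lra. Qed.

Lemma s_alpha_eq : (1 - alpha) * s_alpha a f alpha = F xp.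
Proof.
  rewrite s_alpha_shift. unfold shift_at_level.
  rewrite Fainv_cancel, Fainv_left_cancel by lra. field. lra.
Qed.

Lemma shift_at_level_strict_decr c1 c2 :
  F xp <= c1 -> c1 < c2 -> shift_at_level c2 < shift_at_level c1.
Proof.
  intros H1 H12. unfold shift_at_level.
  assert (HR := Fainv_slope c1 c2 H1 (Rlt_le _ _ H12)).
  assert (HL := Fainv_left_strict_decr c1 c2 H1 H12).
  assert (Hdiv : c2 / (1 - alpha) - c1 / (1 - alpha)
                 <= Fainv a f alpha c2 - Fainv a f alpha c1).
  { replace (c2 / (1 - alpha) - c1 / (1 - alpha)) with ((c2 - c1) / (1 - alpha))
      by (field; lra).
    apply Rle_div_l; [lra|]. lra. }
  lra.
Qed.

Lemma shift_at_level_convex c1 c2 t :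
  F xp <= c1 -> F xp <= c2 -> 0 <= t <= 1 ->
  shift_at_level (t * c1 + (1 - t) * c2)
  <= t * shift_at_level c1 + (1 - t) * shift_at_level c2.
Proof.
  intros H1 H2 Ht. unfold shift_at_level.
  assert (HR := inverse_concave F _ xp F_incr Fainv_spec c1 c2 t F_convex H1 H2 Ht).
  rewrite <- (Ropp_involutive xp) in H1, H2.
  assert (HL := inverse_concave _ _ (- xp) F_opp_incr Fainv_left_opp_spec c1 c2 t
                  (convex_fun_comp_opp F F_convex) H1 H2 Ht).
  replace ((t * c1 + (1 - t) * c2) / (1 - alpha))
    with (t * (c1 / (1 - alpha)) + (1 - t) * (c2 / (1 - alpha))) by (field; lra).
  lra.
Qed.

Lemma shift_left y : y <= - a -> y + delta a f alpha y = y.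
Proof.
  intros Hy. destruct xplus_spec as [Hxp _].
  unfold delta, phi.
  set (z := F y / (1 - alpha)).
  assert (Hz : a <= z).
  { unfold z. apply Rle_div_r; [lra|]. rewrite F_left by exact Hy. nra. }
  assert (Fz : F z = F y) by (rewrite F_right by exact Hz; unfold z; field; lra).
  rewrite <- Fz, (Fainv_cancel z) by lra. ring.
Qed.

Lemma tau_spec x : x <= s_alpha a f alpha ->
  tau a f alpha x <= xp /\ tau a f alpha x + delta a f alpha (tau a f alpha x) = x.
Proof.
  intros Hx. unfold tau. apply epsilon_spec.
  destruct xplus_spec as [Hxp _].
  set (g := fun y => y + F y / (1 - alpha) - Fainv a f alpha (Rmax (F xp) (F y))).
  assert (Eg : forall y, g y = y + delta a f alpha y).
  { intro y. unfold g, delta, phi. rewrite Rmax_right by apply F_ge_min. ring. }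
  assert (Hg : continuity g).
  { intro y. unfold g. apply continuity_pt_minus.
    - apply continuity_pt_plus; [apply continuity_pt_id|].
      apply continuity_pt_mult; [apply F_continuous|].
      apply continuity_pt_const. now intros u v.
    - apply (continuity_pt_comp F (fun c => Fainv a f alpha (Rmax (F xp) c))).
      + apply F_continuous.
      + apply (inverse_continuity F _ xp F_incr Fainv_spec). }
  set (Y := Rmin x (- a)).
  assert (HYa : Y <= - a) by apply Rmin_r.
  assert (HYx : Y <= x) by apply Rmin_l.
  destruct (IVT_value g Y xp x Hg) as [y [Hy Ey]]; [lra| |].
  - rewrite !Eg, shift_left by exact HYa. rewrite shift_at_level_F, <- s_alpha_shift by lra.
    nra.
  - exists y. split; [lra|]. now rewrite <- Eg.
Qed.

Definition level (x : R) : R :=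
  if Rle_dec x (s_alpha a f alpha) then F (tau a f alpha x) else F xp.

Lemma level_spec x : F xp <= level x /\ shift_at_level (level x) <= x.
Proof.
  unfold level. destruct (Rle_dec x (s_alpha a f alpha)) as [Hx|Hx].
  - destruct (tau_spec x Hx) as [A B].
    split; [apply F_ge_min|]. rewrite <- shift_at_level_F by exact A. lra.
  - split; [lra|]. rewrite <- s_alpha_shift. lra.
Qed.

Lemma level_least x c : F xp <= c -> shift_at_level c <= x -> level x <= c.
Proof.
  intros Hc Hcx. unfold level.
  destruct (Rle_dec x (s_alpha a f alpha)) as [Hx|Hx]; [|exact Hc].
  destruct (tau_spec x Hx) as [A B].
  apply Rnot_lt_le. intro Hlt.
  assert (H := shift_at_level_strict_decr c _ Hc Hlt).
  rewrite <- shift_at_level_F in H by exact A. lra.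
Qed.

Lemma level_convex : convex_fun level.
Proof.
  exact (convex_fun_min_sublevel shift_at_level level (F xp)
           shift_at_level_convex level_spec level_least).
Qed.

Lemma Sh_eq x : Sh a f alpha x = alpha * x + Rmax (level x) ((1 - alpha) * x).
Proof.
  assert (Hs := s_alpha_eq). destruct (level_spec x) as [Hmin _].
  revert Hmin. unfold Sh, level.
  destruct (Rle_dec x (s_alpha a f alpha)) as [Hx|Hx]; intros Hmin.
  - rewrite Rmax_left by nra. unfold Fa. ring.
  - rewrite Rmax_right by nra. ring.
Qed.

Lemma Sh_convex : convex_fun (Sh a f alpha).
Proof.
  apply (convex_fun_ext (fun x => alpha * x + Rmax (level x) ((1 - alpha) * x))).
  - intro x. symmetry. apply Sh_eq.
  - apply convex_fun_add_linear, convex_fun_Rmax.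
    + exact level_convex.
    + apply convex_fun_linear.
Qed.

End Shift.

End ClassC.

Theorem corollary4p14 (a alpha : R) (f : R -> R) :
  0 < a -> 0 <= alpha < 1 -> class_C a f ->
  convex_fun (Sh a f alpha).
Proof.
  intros Ha Halpha ((Hder & Hcont) & _ & Habs & Hstrict).
  now apply Sh_convex.
Qed.
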